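(* Let $r,M\ge 1$, $N\ge 1$ a real number, and ${\bf e}_{mn}\in\mathbb{C}^{r}$ ($1\le m,n\le M$) arbitrary vectors. Define, for ${\bf W}$ in the cone $\mathbb{H}^r_+$ of $r\times r$ positive semidefinite Hermitian matrices, $$g({\bf W};N)=\frac{1}{M}\sum_{m=1}^{M}\log\sum_{n=1}^{M}\Big(1+\tfrac12{\bf e}_{mn}^{\mathrm H}{\bf W}{\bf e}_{mn}\Big)^{-N}.$$ Then $g(\cdot;N)$ is convex on $\mathbb{H}^r_+$ and matrix nonincreasing there: if ${\bf W}_1\succeq{\bf W}_2\succeq{\bf 0}$ then $g({\bf W}_1;N)\le g({\bf W}_2;N)$.
   Context: $\log$ is the base-2 logarithm. ${\bf U}\succeq{\bf V}$ means ${\bf U}-{\bf V}$ is positive semidefinite. (In the paper's application ${\bf e}_{mn}={\bf x}_m-{\bf x}_n$ are differences of points of a finite constellation, but the claim holds for arbitrary vectors.) *)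

From HB Require Import structures.
From mathcomp Require Import all_boot all_order all_algebra.
From mathcomp Require Import complex.
From mathcomp Require Import all_classical all_reals all_analysis.
Set Implicit Arguments. Unset Strict Implicit. Unset Printing Implicit Defensive.
Import Order.TTheory GRing.Theory Num.Theory.
Local Open Scope ring_scope.
Local Open Scope complex_scope.

Definition ctrmx (R : realType) (m n : nat) (A : 'M[R[i]]_(m, n)) : 'M[R[i]]_(n, m) :=
  map_mx (@conjc R) A^T.

Definition qform (R : realType) (r : nat) (W : 'M[R[i]]_r) (v : 'cV[R[i]]_r) : R[i] :=
  (ctrmx v *m W *m v) 0 0.

(* W is Hermitian positive semidefinite: W^H = W and v^H W v >= 0 (real, nonneg) *)
Definition hpsd (R : realType) (r : nat) (W : 'M[R[i]]_r) : Prop :=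
  ctrmx W = W /\ forall v : 'cV[R[i]]_r, 0 <= qform W v.

Definition loewner_ge (R : realType) (r : nat) (U V : 'M[R[i]]_r) : Prop :=
  hpsd (U - V).

Definition log2 (R : realType) (x : R) : R := ln x / ln 2.

(* g(W;N) = 1/M sum_m log2 sum_n (1 + 1/2 e_mn^H W e_mn)^(-N) ;
   e_mn^H W e_mn is real for Hermitian W, we take its real part. *)
Definition gfun (R : realType) (r M : nat) (e : 'I_M -> 'I_M -> 'cV[R[i]]_r)
  (N : R) (W : 'M[R[i]]_r) : R :=
  M%:R^-1 * \sum_(m < M) log2 (\sum_(n < M)
      (1 + (complex.Re (qform W (e m n))) / 2) `^ (- N)).

From HB Require Import structures.
From mathcomp Require Import all_boot all_order all_algebra.
From mathcomp Require Import complex.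
From mathcomp Require Import all_classical all_reals all_analysis.
From mathcomp Require Import ring.
Set Implicit Arguments. Unset Strict Implicit. Unset Printing Implicit Defensive.
Import Order.TTheory GRing.Theory Num.Theory.
Local Open Scope ring_scope.

(* Write q_mn(W) = Re(e_mn^H W e_mn) and phi_N(x) = -N ln(1 + x/2), so that
   (1 + x/2)^(-N) = exp(phi_N(x)) and
       g(W;N) = 1/(M ln 2) * sum_m lse_n(phi_N(q_mn(W))),
   where lse(a) = ln(sum_n exp(a_n)) is the log-sum-exp function.
   The argument is a composition rule:
   - q_mn is affine in W (real scalars) and monotone in the Loewner order;
   - phi_N is convex and nonincreasing on [0, +oo) because ln is concave
     and increasing and N >= 0;
   - lse is convex and nondecreasing in each argument.
   Hence each row value lse_n(phi_N(q_mn(W))) is convex in W and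
   nonincreasing in the Loewner order, and so is the positive combination g.
   The file proves the facts about lse and phi_N, then those about q_mn,
   rewrites g in terms of row values, and concludes. *)

Section LogSumExp.
Variable R : realType.

Lemma sum_ord_gt0 (M : nat) (F : 'I_M -> R) :
  (0 < M)%N -> (forall i, 0 < F i) -> 0 < \sum_(i < M) F i.
Proof.
case: M F => // M F _ F_gt0; rewrite big_ord_recl.
by rewrite ltr_wpDr ?F_gt0 // sumr_ge0 // => i _; exact: ltW.
Qed.

Definition lse (M : nat) (a : 'I_M -> R) : R := ln (\sum_(i < M) expR (a i)).

Lemma lse_mono (M : nat) (a b : 'I_M -> R) :
  (0 < M)%N -> (forall i, a i <= b i) -> lse a <= lse b.
Proof.
move=> M_gt0 le_ab; have exp_gt0 (c : 'I_M -> R) i : 0 < expR (c i) := expR_gt0 _.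
rewrite /lse ler_ln ?posrE ?sum_ord_gt0 //.
by apply: ler_sum => i _; rewrite ler_expR.
Qed.

(* lse is convex: normalising both sums to 1, this is the convexity of exp
   applied termwise. *)
Lemma lse_convex (M : nat) (a b : 'I_M -> R) (t : R) :
  (0 < M)%N -> 0 <= t -> t <= 1 ->
  lse (fun i => t * a i + (1 - t) * b i) <= t * lse a + (1 - t) * lse b.
Proof.
move=> M_gt0 t_ge0 t_le1; rewrite /lse.
set Sa := \sum_(i < M) expR (a i); set Sb := \sum_(i < M) expR (b i).
have Sa_gt0 : 0 < Sa by apply: sum_ord_gt0 => // i; exact: expR_gt0.
have Sb_gt0 : 0 < Sb by apply: sum_ord_gt0 => // i; exact: expR_gt0.
set C := t * ln Sa + (1 - t) * ln Sb.
have normalised (c : 'I_M -> R) (S : R) : S = \sum_(i < M) expR (c i) -> 0 < S ->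
    \sum_(i < M) expR (c i - ln S) = 1.
  move=> -> S_gt0; under eq_bigr do rewrite expRD expRN lnK ?posrE //.
  by rewrite -mulr_suml divff // gt_eqF.
suff le_sum : \sum_(i < M) expR (t * a i + (1 - t) * b i) <= expR C.
  by rewrite -[leRHS]expRK ler_ln ?posrE ?expR_gt0 // sum_ord_gt0 // => i;
    exact: expR_gt0.
have split_term i : expR (t * a i + (1 - t) * b i) =
    expR C * expR (t * (a i - ln Sa) + (1 - t) * (b i - ln Sb)).
  by rewrite -expRD /C; congr expR; ring.
under eq_bigr do rewrite split_term.
rewrite -mulr_sumr -[leRHS]mulr1 ler_wpM2l ?expR_ge0 //.
apply: (@le_trans _ _ (\sum_(i < M)
    (t * expR (a i - ln Sa) + (1 - t) * expR (b i - ln Sb)))).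
  apply: ler_sum => i _.
  by have := convex_expR (Itv01 t_ge0 t_le1) (a i - ln Sa) (b i - ln Sb);
    rewrite !convRE.
rewrite big_split /= -!mulr_sumr (normalised a) // (normalised b) //.
by rewrite !mulr1 addrC subrK.
Qed.

End LogSumExp.

Section Penalty.
Variable R : realType.
Variable N : R.
Hypothesis N_ge0 : 0 <= N.

Definition penalty (x : R) : R := - N * ln (1 + x / 2).

Lemma shift_gt0 (x : R) : 0 <= x -> 0 < 1 + x / 2.
Proof. by move=> x_ge0; rewrite ltr_wpDr // divr_ge0. Qed.

Lemma powR_penalty (x : R) : 0 <= x -> (1 + x / 2) `^ (- N) = expR (penalty x).
Proof. by move=> x_ge0; rewrite /powR gt_eqF ?shift_gt0. Qed.

(* phi_N is convex on [0, +oo), by concavity of ln. *)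
Lemma penalty_convex (t x y : R) : 0 <= t -> t <= 1 -> 0 <= x -> 0 <= y ->
  penalty (t * x + (1 - t) * y) <= t * penalty x + (1 - t) * penalty y.
Proof.
move=> t_ge0 t_le1 x_ge0 y_ge0.
have ln_concave := concave_ln (Itv01 t_ge0 t_le1) (shift_gt0 x_ge0) (shift_gt0 y_ge0).
rewrite !convRE /= in ln_concave; rewrite /penalty.
have -> : 1 + (t * x + (1 - t) * y) / 2 = t * (1 + x / 2) + (1 - t) * (1 + y / 2)
  by ring.
have -> : t * (- N * ln (1 + x / 2)) + (1 - t) * (- N * ln (1 + y / 2)) =
    - N * (t * ln (1 + x / 2) + (1 - t) * ln (1 + y / 2)) by ring.
by rewrite !mulNr lerN2 ler_wpM2l.
Qed.

Lemma penalty_nonincr (x y : R) : 0 <= y -> y <= x -> penalty x <= penalty y.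
Proof.
move=> y_ge0 le_yx; have x_ge0 := le_trans y_ge0 le_yx.
rewrite /penalty !mulNr lerN2 ler_wpM2l // ler_ln ?posrE ?shift_gt0 //.
by rewrite lerD2l ler_pM2r.
Qed.

Definition row_value (M : nat) (x : 'I_M -> R) : R := lse (fun n => penalty (x n)).

Lemma row_value_convex (M : nat) (x y z : 'I_M -> R) (t : R) :
  (0 < M)%N -> 0 <= t -> t <= 1 -> (forall n, 0 <= x n) -> (forall n, 0 <= y n) ->
  (forall n, z n = t * x n + (1 - t) * y n) ->
  row_value z <= t * row_value x + (1 - t) * row_value y.
Proof.
move=> M_gt0 t_ge0 t_le1 x_ge0 y_ge0 z_def.
apply: le_trans (lse_convex _ _ M_gt0 t_ge0 t_le1).
by apply: lse_mono => // n; rewrite z_def penalty_convex.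
Qed.

Lemma row_value_nonincr (M : nat) (x y : 'I_M -> R) :
  (0 < M)%N -> (forall n, 0 <= y n) -> (forall n, y n <= x n) ->
  row_value x <= row_value y.
Proof.
by move=> M_gt0 y_ge0 le_yx; apply: lse_mono => // n; exact: penalty_nonincr.
Qed.

End Penalty.

Section QuadraticForms.
Variables (R : realType) (r : nat).

Definition qre (W : 'M[R[i]]_r) (v : 'cV[R[i]]_r) : R := complex.Re (qform W v).

Lemma qform_lin (a b : R[i]) (W1 W2 : 'M[R[i]]_r) v :
  qform (a *: W1 + b *: W2) v = a * qform W1 v + b * qform W2 v.
Proof. by rewrite /qform mulmxDr mulmxDl -!scalemxAr -!scalemxAl !mxE. Qed.

Lemma qre_conv (t : R) (W1 W2 : 'M[R[i]]_r) v :
  qre ((t%:C)%C *: W1 + ((1 - t)%:C)%C *: W2) v = t * qre W1 v + (1 - t) * qre W2 v.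
Proof.
rewrite /qre qform_lin.
by case: (qform W1 v) => ??; case: (qform W2 v) => ?? /=; rewrite !mul0r !subr0.
Qed.

Lemma qre_ge0 (W : 'M[R[i]]_r) v : hpsd W -> 0 <= qre W v.
Proof.
case=> _ /(_ v); rewrite /qre.
by case: (qform W v) => ??; rewrite lecE => /andP[].
Qed.

Lemma qre_sub (W1 W2 : 'M[R[i]]_r) v : qre (W1 - W2) v = qre W1 v - qre W2 v.
Proof.
rewrite /qre.
have -> : qform (W1 - W2) v = qform W1 v - qform W2 v.
  by rewrite /qform mulmxBr mulmxBl !mxE.
by case: (qform W1 v) => ??; case: (qform W2 v) => ??.
Qed.

Lemma qre_loewner (W1 W2 : 'M[R[i]]_r) v : loewner_ge W1 W2 -> qre W2 v <= qre W1 v.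
Proof. by move/(qre_ge0 v); rewrite qre_sub subr_ge0. Qed.

End QuadraticForms.

Lemma gfun_row_values (R : realType) (r M : nat) (e : 'I_M -> 'I_M -> 'cV[R[i]]_r)
    (N : R) (W : 'M[R[i]]_r) : (forall m n, 0 <= qre W (e m n)) ->
  gfun e N W = (M%:R^-1 / ln 2) * \sum_(m < M) row_value N (fun n => qre W (e m n)).
Proof.
move=> q_ge0; rewrite /gfun -mulrA; congr (_ * _).
rewrite mulr_sumr; apply: eq_bigr => m _.
rewrite /log2 mulrC /row_value /lse; congr (_ * ln _).
by apply: eq_bigr => n _; rewrite powR_penalty //; exact: q_ge0.
Qed.

Theorem proposition4 (R : realType) (r M : nat) (N : R)
  (e : 'I_M -> 'I_M -> 'cV[R[i]]_r) :
  (1 <= r)%N -> (1 <= M)%N -> 1 <= N ->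
  (forall (W1 W2 : 'M[R[i]]_r) (t : R), hpsd W1 -> hpsd W2 -> 0 <= t <= 1 ->
     gfun e N ((t%:C)%C *: W1 + ((1 - t)%:C)%C *: W2)
       <= t * gfun e N W1 + (1 - t) * gfun e N W2) /\
  (forall W1 W2 : 'M[R[i]]_r, hpsd W2 -> loewner_ge W1 W2 ->
     gfun e N W1 <= gfun e N W2).
Proof.
move=> _ M_gt0 N_ge1; have N_ge0 : 0 <= N := le_trans ler01 N_ge1.
have c_ge0 : 0 <= (M%:R^-1 / ln 2 : R).
  by rewrite divr_ge0 ?invr_ge0 ?ler0n // ltW // ln_gt0 // ltr1n.
split=> [W1 W2 t psd1 psd2 /andP[t_ge0 t_le1] | W1 W2 psd2 le_W21].
- have q1 m n := qre_ge0 (e m n) psd1; have q2 m n := qre_ge0 (e m n) psd2.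
  have q12 m n : 0 <= qre ((t%:C)%C *: W1 + ((1 - t)%:C)%C *: W2) (e m n).
    by rewrite qre_conv addr_ge0 // mulr_ge0 // subr_ge0.
  rewrite (gfun_row_values N q12) (gfun_row_values N q1) (gfun_row_values N q2).
  rewrite (mulrCA t) (mulrCA (1 - t)) -mulrDr; apply: (ler_wpM2l c_ge0).
  rewrite !mulr_sumr -big_split /=; apply: ler_sum => m _.
  by apply: row_value_convex => // n; rewrite qre_conv.
- have q2 m n := qre_ge0 (e m n) psd2.
  have q21 m n := qre_loewner (e m n) le_W21.
  have q1 m n : 0 <= qre W1 (e m n) by apply: le_trans (q2 m n) (q21 m n).
  rewrite (gfun_row_values N q1) (gfun_row_values N q2).
  apply: (ler_wpM2l c_ge0); apply: ler_sum => m _; exact: row_value_nonincr.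
Qed.
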